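(* Let $k$ be a field and $\mathsf{E}$ a left strictly locally finite $k$-linear category. Then the class of left $\mathsf{E}$-modules isomorphic to $\Theta_\mathsf{E}(\mathfrak{P})$ for some locally finite left $\mathcal{C}_\mathsf{E}$-contramodule $\mathfrak{P}$ is closed under extensions in the category of left $\mathsf{E}$-modules (and in the category of locally finite left $\mathsf{E}$-modules): if $0\to P'\to T\to P''\to 0$ is a short exact sequence of left $\mathsf{E}$-modules and $P',P''$ belong to this class, then so does $T$.
   Context: A small $k$-linear category $\mathsf{E}$ has $k$-vector spaces $\operatorname{Hom}_\mathsf{E}(x,y)$, $k$-bilinear associative composition and identities with $\mathrm{id}_x\ne0$. A left $\mathsf{E}$-module is a $k$-linear functor $\mathsf{E}\to k\text{-Vect}$; locally finite if all its values are finite-dimensional. Write $x\preceq y$ if there are $n\ge1$ and objects $x=z_0,\dots,z_n=y$ with $\operatorname{Hom}_\mathsf{E}(z_{i-1},z_i)\neq0$ for all $i$; $x\prec y$ means $x\preceq y$ and not $y\preceq x$. $\mathsf{E}$ is locally finite if all Hom spaces are finite-dimensional and every $\{z:x\preceq z\preceq y\}$ is finite; left strictly locally finite if moreover for every $y$ there is a finite set $X_y$ of objects with $x\prec y$ for $x\in X_y$ such that every $f:z\to y$ with $z\prec y$ equals $\sum_{i=1}^nh_ig_i$ ($n\ge0$) with $g_i:z\to x_i$, $h_i:x_i\to y$, $x_i\in X_y$. $\mathcal{C}_\mathsf{E}=\bigoplus_{x,y}\mathcal{C}^{x,y}$, $\mathcal{C}^{x,y}=\operatorname{Hom}_\mathsf{E}(x,y)^*$;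 counit zero on $\mathcal{C}^{x,y}$ for $x\ne y$, evaluation at $\mathrm{id}_x$ on $\mathcal{C}^{x,x}$; comultiplication $\mathcal{C}^{x,y}\to\bigoplus_z\mathcal{C}^{x,z}\otimes\mathcal{C}^{z,y}$ dual to composition $g\otimes h\mapsto hg$. A left contramodule over a coalgebra $(\mathcal{C},\mu,\epsilon)$ is a space $\mathfrak{P}$ with $\pi:\operatorname{Hom}_k(\mathcal{C},\mathfrak{P})\to\mathfrak{P}$ such that $\pi(c\mapsto\epsilon(c)p)=p$ and, under $\operatorname{Hom}_k(\mathcal{C},\operatorname{Hom}_k(\mathcal{C},\mathfrak{P}))\cong\operatorname{Hom}_k(\mathcal{C}\otimes\mathcal{C},\mathfrak{P})$, $f\mapsto(c'\otimes c''\mapsto f(c'')(c'))$, $\pi(c\mapsto\pi(f(c)))=\pi(f\circ\mu)$. Set $\varphi\cdot p=\pi(c\mapsto\varphi(c)p)$. With $e_x$ evaluation at $\mathrm{id}_x$ on $\mathcal{C}^{x,x}$ (zero elsewhere) and $\mathrm{ev}_f$, for $f\in\operatorname{Hom}_\mathsf{E}(x,y)$, evaluation at $f$ on $\mathcal{C}^{x,y}$ (zero elsewhere): $\Theta_\mathsf{E}(\mathfrak{P})(x)=e_x\cdot\mathfrak{P}$, $f$ acting by $p\mapsto\mathrm{ev}_f\cdot p$. $\mathfrak{P}$ is locally finite if $\Theta_\mathsf{E}(\mathfrak{P})$ is. *)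

From HB Require Import structures.
From mathcomp Require Import all_boot all_order all_algebra.
From Stdlib Require List.
From Stdlib Require Import ClassicalEpsilon.
Set Implicit Arguments.
Unset Strict Implicit.
Unset Printing Implicit Defensive.
Import GRing.Theory.
Local Open Scope ring_scope.

(* comp h g is the composite  hg : x -> z  of g : x -> y and h : y -> z.   *)
Record kcat (k : fieldType) : Type := KCat {
  Ob : Type;
  Hom : Ob -> Ob -> vectType k;
  comp : forall x y z : Ob, Hom y z -> Hom x y -> Hom x z;
  idm : forall x : Ob, Hom x x;
  comp_linl : forall x y z (g : Hom x y) (a : k) (h1 h2 : Hom y z),
      comp (a *: h1 + h2) g = a *: comp h1 g + comp h2 g;
  comp_linr : forall x y z (h : Hom y z) (a : k) (g1 g2 : Hom x y),
      comp h (a *: g1 + g2) = a *: comp h g1 + comp h g2;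
  comp_assoc : forall x y z w (f : Hom x y) (g : Hom y z) (h : Hom z w),
      comp h (comp g f) = comp (comp h g) f;
  comp_idl : forall x y (f : Hom x y), comp (idm y) f = f;
  comp_idr : forall x y (f : Hom x y), comp f (idm x) = f;
  idm_neq0 : forall x : Ob, idm x != 0
}.
Arguments comp {k} e {x y z} : rename.
Arguments idm {k} e x : rename.
Arguments Hom {k} e x y : rename.

Section Defs.
Variables (k : fieldType) (E : kcat k).
Local Notation Ob := (Ob E).
Local Notation Hom := (Hom E).

Definition hom_nz (x y : Ob) : Prop := exists f : Hom x y, f != 0.

Inductive preceq : Ob -> Ob -> Prop :=
| preceq1 x y : hom_nz x y -> preceq x y
| preceqS x y z : hom_nz x y -> preceq y z -> preceq x z.

Definition prec (x y : Ob) : Prop := preceq x y /\ ~ preceq y x.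

(* finite-dimensionality of all Hom spaces is built into vectType *)
Definition locally_finite : Prop :=
  forall x y : Ob, exists zs : seq Ob,
    forall z, preceq x z -> preceq z y -> List.In z zs.

Definition left_strictly_locally_finite : Prop :=
  locally_finite /\
  forall y : Ob, exists Xy : seq Ob,
    (forall x, List.In x Xy -> prec x y) /\
    forall (z : Ob) (f : Hom z y), prec z y ->
      exists (n : nat) (xs : 'I_n -> Ob),
        (forall i, List.In (xs i) Xy) /\
        exists (g : forall i, Hom z (xs i)) (h : forall i, Hom (xs i) y),
          f = \sum_(i < n) comp E (h i) (g i).

Record lmodE : Type := LModE {
  Mv : Ob -> lmodType k;
  Mact : forall x y : Ob, Hom x y -> Mv x -> Mv y;
  Mact_linf : forall x y (a : k) (f1 f2 : Hom x y) (m : Mv x),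
      Mact (a *: f1 + f2) m = a *: Mact f1 m + Mact f2 m;
  Mact_linm : forall x y (f : Hom x y) (a : k) (m1 m2 : Mv x),
      Mact f (a *: m1 + m2) = a *: Mact f m1 + Mact f m2;
  Mact_comp : forall x y z (g : Hom x y) (h : Hom y z) (m : Mv x),
      Mact (comp E h g) m = Mact h (Mact g m);
  Mact_id : forall x (m : Mv x), Mact (idm E x) m = m
}.

Definition is_lin (U V : lmodType k) (f : U -> V) : Prop :=
  forall (a : k) (u v : U), f (a *: u + v) = a *: f u + f v.

Definition is_morph (M N : lmodE) (phi : forall x, Mv M x -> Mv N x) : Prop :=
  (forall x, is_lin (phi x)) /\
  (forall x y (f : Hom x y) (m : Mv M x), phi y (Mact f m) = Mact f (phi x m)).

Definition short_exact (A B C : lmodE)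
    (alpha : forall x, Mv A x -> Mv B x) (beta : forall x, Mv B x -> Mv C x) :
    Prop :=
  is_morph alpha /\ is_morph beta /\
  (forall x, injective (alpha x)) /\
  (forall x (c : Mv C x), exists b, beta x b = c) /\
  (forall x (b : Mv B x), beta x b = 0 <-> exists a, alpha x a = b).

(* The coalgebra C_E = (+)_{x,y} Hom(x,y)^*  and its contramodules.        *)
(* C^{x,y} = Hom_k(Hom(x,y), k).  A linear map C_E -> P is the same as a   *)
(* family of linear maps C^{x,y} -> P (universal property of (+)).         *)
Definition Cxy (x y : Ob) := 'Hom(Hom x y, (k^o)%type).

Definition fam (P : lmodType k) := forall x y : Ob, Cxy x y -> P.

(* the elements of Hom_k(C_E, P) *)
Definition linfam (P : lmodType k) (F : fam P) : Prop :=
  forall x y, is_lin (F x y).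

Definition cast_hom (x y z w : Ob) (H : x = z /\ y = w) (f : Hom x y) : Hom z w :=
  match H with
  | conj e1 e2 =>
      match e1 in _ = a return Hom a w with
      | erefl => match e2 in _ = b return Hom x b with erefl => f end
      end
  end.

(* the element of Hom_k(C_E, P) given by  c |-> ev_f(c) p ,
   f : x -> y :  c(f) p on C^{x,y}, zero on the other components *)
Definition evfam (P : lmodType k) (x y : Ob) (f : Hom x y) (p : P) : fam P :=
  fun z w (c : Cxy z w) =>
    match excluded_middle_informative (x = z /\ y = w) with
    | left H => ((c (cast_hom H f) : k) *: p)
    | right _ => 0
    end.

(* counit: c |-> eps(c) p  =  evaluation at id_x on each C^{x,x} *)
Definition counit_fam_spec (P : lmodType k) (p : P) (F : fam P) : Prop :=
  (forall x (c : Cxy x x), F x x c = (c (idm E x) : k) *: p) /\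
  (forall x y, x <> y -> forall c : Cxy x y, F x y c = 0).

(* a duplicate-free list containing the interval {z | x <= z <= y}
   (exists when E is locally finite) *)
Definition interval_list (x y : Ob) : seq Ob :=
  epsilon (inhabits [::]) (fun zs : seq Ob =>
     List.NoDup zs /\ forall z, preceq x z -> preceq z y -> List.In z zs).

Definition dualb (x z : Ob) (i : 'I_(\dim (fullv : {vspace Hom x z}))) : Cxy x z :=
  linfun (fun g : Hom x z =>
            (coord (vbasis (fullv : {vspace Hom x z})) i g : (k^o)%type)).

Definition precomp (x y z : Ob) (c : Cxy x y) (g : Hom x z) : Cxy z y :=
  linfun (fun h : Hom z y => c (comp E h g)).

(* Given f : C_E -> Hom_k(C_E, P), viewed as the map C_E (x) C_E -> P,
   c' (x) c'' |-> f(c'')(c'), this is the composite f o mu.  The component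
   of mu(c), c in C^{x,y}, in C^{x,z} (x) C^{z,y} is
   sum_i g_i^* (x) c(- o g_i)  for a basis (g_i) of Hom(x,z)
   (the element dual to g (x) h |-> c(hg)). *)
Definition comul_fam (P : lmodType k) (f : forall z w, Cxy z w -> fam P) : fam P :=
  fun x y (c : Cxy x y) =>
    \sum_(z <- interval_list x y)
      \sum_(i < \dim (fullv : {vspace Hom x z}))
        f z y (precomp c (vbasis (fullv : {vspace Hom x z}))`_i) x z (dualb i).

Definition is_contramodule (P : lmodType k) (pi : fam P -> P) : Prop :=
  (forall (a : k) (F G : fam P), linfam F -> linfam G ->
      pi (fun x y c => a *: F x y c + G x y c) = a *: pi F + pi G) /\
  (forall (p : P) (F : fam P), linfam F -> counit_fam_spec p F -> pi F = p) /\
  (forall f : forall z w, Cxy z w -> fam P,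
      (forall z w c, linfam (f z w c)) ->
      (forall z w (a : k) (c d : Cxy z w) z' w' (c' : Cxy z' w'),
          f z w (a *: c + d) z' w' c' = a *: f z w c z' w' c' + f z w d z' w' c') ->
      pi (fun z w c => pi (f z w c)) = pi (comul_fam f)).

(* Theta_E(P)(x) = e_x . P  (as a subset of P) *)
Definition inTheta (P : lmodType k) (pi : fam P -> P) (x : Ob) (q : P) : Prop :=
  exists p : P, q = pi (evfam (idm E x) p).

Definition contra_locally_finite (P : lmodType k) (pi : fam P -> P) : Prop :=
  forall x : Ob, exists s : seq P,
    (forall q, List.In q s -> inTheta pi x q) /\
    (forall q, inTheta pi x q ->
       exists cs : 'I_(size s) -> k, q = \sum_(i < size s) cs i *: s`_i).

(* M is isomorphic, as a left E-module, to Theta_E(P), where f : x -> y acts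
   on Theta_E(P) by p |-> ev_f . p *)
Definition iso_Theta (M : lmodE) (P : lmodType k) (pi : fam P -> P) : Prop :=
  exists phi : forall x, Mv M x -> P,
    (forall x, is_lin (phi x)) /\
    (forall x, injective (phi x)) /\
    (forall x (q : P), inTheta pi x q <-> exists m, phi x m = q) /\
    (forall x y (f : Hom x y) (m : Mv M x),
        phi y (Mact f m) = pi (evfam f (phi x m))).

Definition in_Theta_class (M : lmodE) : Prop :=
  exists (P : lmodType k) (pi : fam P -> P),
    is_contramodule pi /\ contra_locally_finite pi /\ iso_Theta M pi.

End Defs.

From HB Require Import structures.
From mathcomp Require Import all_boot all_order all_algebra.
From mathcomp Require Import boolp.
From Stdlib Require List.
From Stdlib Require Import ClassicalEpsilon.
Set Implicit Arguments. Unset Strict Implicit. Unset Printing Implicit Defensive.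
Import GRing.Theory.
Local Open Scope ring_scope.

(* A locally finite left E-module M lies in the class iff it is deep-nilpotent: for every
   object y there is an N such that every morphism into y factoring N times in succession
   through the finite sets X_(-) acts by zero on M.  Local finiteness and deep-nilpotence
   are both closed under extensions.

   If M is deep-nilpotent, only finitely many objects act nontrivially into each M(y), so
   the product of the M(y) carries a contraaction given by finite sums, and its Theta is M.

   Conversely let M = Theta(P).  By finite-dimensionality the subspaces of M(y) spanned by
   images of N-deep morphisms stabilize to some V(y), and V(y) is covered by the images of
   the V(w), w in X_y.  Iterating these decompositions yields chains descending strictly in
   the preorder, which die out because intervals are finite.  Feeding the resulting
   relations into contraassociativity, the comultiplication telescopes and forces
   V(y) = 0. *)

(** * Finite sums, linear maps and spans *)

Lemma In_mem (T : eqType) (x : T) (s : seq T) : List.In x s <-> x \in s.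
Proof.
elim: s => [|a s IH] /=; first by rewrite in_nil.
rewrite in_cons; split; first by case=> [->|/IH ->]; rewrite ?eqxx ?orbT.
by case/orP => [/eqP->|/IH]; [left|right].
Qed.

Lemma NoDup_uniq (T : eqType) (s : seq T) : List.NoDup s <-> uniq s.
Proof.
elim: s => [|a s IH] /=; first by split => // _; constructor.
split.
  by move=> hn; inversion hn; apply/andP; split; [apply/negP => /In_mem | apply/IH].
by case/andP => /negP ha /IH hs; constructor => // /In_mem.
Qed.

Lemma In_map (A B : Type) (F : A -> B) (s : seq A) (b : B) :
  List.In b (map F s) <-> exists2 a, List.In a s & b = F a.
Proof.
elim: s => [|a s IH] /=; first by split => // -[].
rewrite IH; split; first by case=> [<-|[a' ? ->]]; [exists a; [left|]|exists a'; [right|]].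
by case=> a' [<-|h] ->; [left|right; exists a'].
Qed.

Lemma In_flatten (A : Type) (ss : seq (seq A)) (b : A) :
  List.In b (flatten ss) <-> exists2 s, List.In s ss & List.In b s.
Proof.
elim: ss => [|s ss IH] /=; first by split => // -[].
rewrite List.in_app_iff IH; split.
  by case=> [h|[s' ? ?]]; [exists s; [left|]|exists s'; [right|]].
by case=> s' [<-|h1] h2; [left|right; exists s'].
Qed.

Lemma eq_big_In (V : zmodType) (I : Type) (s : seq I) (F G : I -> V) :
  (forall i, List.In i s -> F i = G i) -> \sum_(i <- s) F i = \sum_(i <- s) G i.
Proof.
elim: s => [|a s IH] h; first by rewrite !big_nil.
by rewrite !big_cons h ?IH //; [move=> i hi; apply: h; right | left].
Qed.

Lemma big1_In (V : zmodType) (I : Type) (s : seq I) (F : I -> V) :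
  (forall i, List.In i s -> F i = 0) -> \sum_(i <- s) F i = 0.
Proof. by move=> h; rewrite (eq_big_In (G := fun _ => 0)) ?big1. Qed.

Lemma big_uniq_subset (I : eqType) (V : zmodType) (r1 r2 : seq I) (F : I -> V) :
  uniq r1 -> uniq r2 -> {subset r1 <= r2} ->
  (forall x, x \in r2 -> x \notin r1 -> F x = 0) ->
  \sum_(x <- r1) F x = \sum_(x <- r2) F x.
Proof.
move=> u1 u2 hsub h0; rewrite [RHS](bigID (mem r1)) /= [X in _ + X]big1_seq ?addr0.
  rewrite -[RHS]big_filter; apply/perm_big/uniq_perm; rewrite ?filter_uniq //.
  by move=> x; rewrite mem_filter; case: (boolP (x \in r1)) => //= /hsub.
by move=> x /andP [hx1 hx2]; apply: h0.
Qed.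

Lemma big_ord_widen_vanish (V : zmodType) n N (F : nat -> V) : (n <= N)%N ->
  (forall j, (n <= j)%N -> F j = 0) -> \sum_(j < n) F j = \sum_(j < N) F j.
Proof.
move=> hnN F0; rewrite (big_ord_widen N F hnN) big_mkcond; apply: eq_bigr => j _.
by case: ltnP => // /F0.
Qed.

Lemma sum_if_eq_uniq (I : eqType) (V : zmodType) (r : seq I) (i : I) (X : V) :
  uniq r -> \sum_(z <- r) (if i == z then X else 0) = if i \in r then X else 0.
Proof.
elim: r => [|a r IH]; rewrite ?big_nil // big_cons in_cons => /andP [ar /IH ->].
by case: eqP => [->|_]; rewrite ?(negbTE ar) ?addr0 ?add0r.
Qed.

Lemma choice_In (A : Type) (B : A -> Type) (b0 : forall a, B a) (s : seq A)
    (Q : forall a, B a -> Prop) :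
  (forall a, List.In a s -> exists b, Q a b) ->
  exists F : forall a, B a, forall a, List.In a s -> Q a (F a).
Proof.
move=> h; exists (fun a => epsilon (inhabits (b0 a)) (Q a)).
by move=> a ha; apply: epsilon_spec; exact: h.
Qed.

Section LinearMaps.
Variables (k : fieldType) (U V : lmodType k) (f : U -> V).
Hypothesis f_lin : is_lin f.

Let f_linear : {linear U -> V} := HB.pack f (GRing.isLinear.Build k U V *:%R f f_lin).

Lemma is_lin0 : f 0 = 0. Proof. exact: (linear0 f_linear). Qed.
Lemma is_linZ a u : f (a *: u) = a *: f u. Proof. exact: (linearZ_LR f_linear). Qed.
Lemma is_linB u v : f (u - v) = f u - f v. Proof. exact: (linearB f_linear). Qed.
Lemma is_lin_sum I (r : seq I) (F : I -> U) :
  f (\sum_(i <- r) F i) = \sum_(i <- r) f (F i).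
Proof. exact: (linear_sum f_linear). Qed.

End LinearMaps.

Lemma linfunE_lin (k : fieldType) (aT rT : vectType k) (f : aT -> rT) :
  linear f -> linfun f =1 f.
Proof.
move=> lf; exact: (lfunE (HB.pack f (GRing.isLinear.Build k aT rT *:%R f lf))).
Qed.

Section Spans.
Variable k : fieldType.

Lemma subspace_of_pred (V : vectType k) (S : V -> Prop) :
  S 0 -> (forall a u v, S u -> S v -> S (a *: u + v)) ->
  exists U : {vspace V}, forall v, v \in U <-> S v.
Proof.
move=> S0 S_lin.
pose inner (n : nat) :=
  `[< exists2 U : {vspace V}, (forall v, v \in U -> S v) & \dim U = n >].
have inner0 : inner 0%N.
  by apply/asboolP; exists 0%VS; rewrite ?dimv0 // => v; rewrite memv0 => /eqP ->.
have inner_le n : inner n -> (n <= \dim (fullv : {vspace V}))%N.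
  by case/asboolP => U _ <-; exact: dimvS (subvf U).
case: (ex_maxnP (ex_intro inner 0%N inner0) inner_le) => _ /asboolP [U US <-] Umax.
exists U => v; split=> [/US //|Sv]; apply: contrapT => /negP vU.
have : inner (\dim (U + <[v]>)).
  apply/asboolP; exists (U + <[v]>)%VS => // w /memv_addP [u Uu [_ /vlineP [c ->] ->]].
  by rewrite addrC; apply: S_lin => //; exact: US.
move/Umax; apply/negP; rewrite -ltnNge (ltn_leqif (dimv_leqif_sup (addvSl U _))).
by rewrite subv_add subvv /= -memvE.
Qed.

Definition spanned (V : lmodType k) (s : seq V) (v : V) : Prop :=
  exists c : nat -> k, v = \sum_(i < size s) c i *: s`_i.

Lemma descending_subspaces_stabilize (V : lmodType k) (s : seq V) (W : nat -> V -> Prop) :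
  (forall v, spanned s v) ->
  (forall n, W n 0) ->
  (forall n a u v, W n u -> W n v -> W n (a *: u + v)) ->
  (forall n v, W n.+1 v -> W n v) ->
  exists N0, forall n, (N0 <= n)%N -> forall v, W N0 v -> W n v.
Proof.
move=> s_span W0 W_lin W_decr.
pose comb (a : 'rV[k]_(size s)) : V := \sum_(i < size s) a 0 i *: s`_i.
have comb_lin c a b : comb (c *: a + b) = c *: comb a + comb b.
  rewrite /comb scaler_sumr -big_split; apply: eq_bigr => i _.
  by rewrite !mxE scalerDl scalerA.
have comb0 : comb 0 = 0 by rewrite /comb big1 // => i _; rewrite mxE scale0r.
have U_ex n : exists U : {vspace 'rV[k]_(size s)}, forall a, a \in U <-> W n (comb a).
  apply: subspace_of_pred; first by rewrite comb0.
  by move=> c a b ha hb; rewrite comb_lin; exact: W_lin.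
pose U n := sval (cid (U_ex n)).
have memU n a : a \in U n <-> W n (comb a) := svalP (cid (U_ex n)) a.
have U_decr m n : (m <= n)%N -> (U n <= U m)%VS.
  move=> /subnK <-; elim: (n - m)%N => [|d IH]; first exact: subvv.
  by apply: subv_trans IH; apply/subvP => a /memU ha; apply/memU; exact: W_decr.
have dim_ex : exists d, `[< exists n, \dim (U n) = d >].
  by exists (\dim (U 0%N)); apply/asboolP; exists 0%N.
case: (ex_minnP dim_ex) => d /asboolP [N0 dimN0] dmin.
exists N0 => n hn v; have [c ->] := s_span v.
have -> : \sum_(i < size s) c i *: s`_i = comb (\row_i c i).
  by apply: eq_bigr => i _; rewrite mxE.
have /eqP UnN0 : U n == U N0.
  by rewrite eqEdim U_decr //= dimN0 dmin //; apply/asboolP; exists n.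
by move/memU; rewrite -UnN0 => /memU.
Qed.

Lemma spanned_ord (V : lmodType k) (s : seq V) (v : V) :
  (exists cs : 'I_(size s) -> k, v = \sum_(i < size s) cs i *: s`_i) -> spanned s v.
Proof.
move=> [cs ->]; exists (fun n => if insub n is Some i then cs i else 0).
by apply: eq_bigr => i _; rewrite valK.
Qed.

Lemma spanned_cat (V : lmodType k) (s1 s2 : seq V) u w :
  spanned s1 u -> spanned s2 w -> spanned (s1 ++ s2) (u + w).
Proof.
move=> [c1 ->] [c2 ->].
exists (fun i => if (i < size s1)%N then c1 i else c2 (i - size s1)%N).
rewrite size_cat big_split_ord; congr (_ + _); apply: eq_bigr => i _.
  by rewrite /= ltn_ord nth_cat ltn_ord.
by rewrite /= ltnNge leq_addr /= addKn nth_cat ltnNge leq_addr /= addKn.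
Qed.

Lemma spanned_map (U V : lmodType k) (f : U -> V) (s : seq U) (u : U) :
  is_lin f -> spanned s u -> spanned (map f s) (f u).
Proof.
move=> f_lin [c ->]; exists c; rewrite size_map (is_lin_sum f_lin).
by apply: eq_bigr => i _; rewrite (is_linZ f_lin) (nth_map 0).
Qed.

Lemma spanned_map_inj (U V : lmodType k) (f : U -> V) (s : seq U) (u : U) :
  is_lin f -> injective f -> spanned (map f s) (f u) -> spanned s u.
Proof.
move=> f_lin f_inj [c hc]; exists c; apply: f_inj; rewrite hc size_map (is_lin_sum f_lin).
by apply: eq_bigr => i _; rewrite (is_linZ f_lin) (nth_map 0).
Qed.

End Spans.

Definition module_locally_finite (k : fieldType) (E : kcat k) (M : lmodE E) : Prop :=
  forall y : Ob E, exists s : seq (Mv M y), forall m, spanned s m.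

Lemma module_locally_finite_ext (k : fieldType) (E : kcat k) (P' T P'' : lmodE E)
    (alpha : forall x, Mv P' x -> Mv T x) (beta : forall x, Mv T x -> Mv P'' x) :
  short_exact alpha beta -> module_locally_finite P' -> module_locally_finite P'' ->
  module_locally_finite T.
Proof.
move=> [[alpha_lin _] [[beta_lin _] [_ [beta_onto exact_mid]]]] P'_fin P''_fin x.
have [s1 s1_span] := P'_fin x; have [s2 s2_span] := P''_fin x.
have [sec secK] : exists sec : Mv P'' x -> Mv T x, cancel sec (beta x).
  by exists (fun q => sval (cid (beta_onto x q))) => q; exact: svalP (cid (beta_onto x q)).
exists (map (alpha x) s1 ++ map sec s2) => t.
have [c hc] := s2_span (beta x t).
set u := \sum_(i < size (map sec s2)) c i *: (map sec s2)`_i.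
have beta_u : beta x u = beta x t.
  rewrite hc (is_lin_sum (beta_lin x)) size_map; apply: eq_bigr => i _.
  by rewrite (is_linZ (beta_lin x)) (nth_map 0) ?secK.
have [a alpha_a] : exists a, alpha x a = t - u.
  by apply/exact_mid; rewrite (is_linB (beta_lin x)) beta_u subrr.
rewrite -[t](subrK u) -alpha_a; apply: spanned_cat; last by exists c.
exact: spanned_map (alpha_lin x) (s1_span a).
Qed.

(** * Linear categories, duals and contramodules *)

HB.instance Definition _ (k : fieldType) (E : kcat k) := gen_eqMixin (Ob E).

Section CategoryLinearity.
Variables (k : fieldType) (E : kcat k).

Lemma comp_sumr x y z I (r : seq I) (F : I -> Hom E x y) (h : Hom E y z) :
  comp E h (\sum_(i <- r) F i) = \sum_(i <- r) comp E h (F i).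
Proof. exact: (is_lin_sum (comp_linr h)). Qed.

Variable M : lmodE E.

Lemma MactZl x y a (f : Hom E x y) (m : Mv M x) : Mact (a *: f) m = a *: Mact f m.
Proof. exact: (is_linZ (fun a f1 f2 => Mact_linf a f1 f2 m)). Qed.
Lemma Mact_suml x y I (r : seq I) (F : I -> Hom E x y) (m : Mv M x) :
  Mact (\sum_(i <- r) F i) m = \sum_(i <- r) Mact (F i) m.
Proof. exact: (is_lin_sum (fun a f1 f2 => Mact_linf a f1 f2 m)). Qed.

Lemma Mact0r x y (f : Hom E x y) : Mact f (0 : Mv M x) = 0.
Proof. exact: (is_lin0 (Mact_linm f)). Qed.
Lemma MactZr x y a (f : Hom E x y) (m : Mv M x) : Mact f (a *: m) = a *: Mact f m.
Proof. exact: (is_linZ (Mact_linm f)). Qed.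
Lemma Mact_sumr x y I (r : seq I) (F : I -> Mv M x) (f : Hom E x y) :
  Mact f (\sum_(i <- r) F i) = \sum_(i <- r) Mact f (F i).
Proof. exact: (is_lin_sum (Mact_linm f)). Qed.

End CategoryLinearity.

Notation hdim x y := (\dim (fullv : {vspace Hom _ x y})).

Section Category.
Variables (k : fieldType) (E : kcat k).

Lemma preceq_trans (x y z : Ob E) : preceq x y -> preceq y z -> preceq x z.
Proof. by elim=> [a b hab|a b c hab _ IH] hz; apply: (preceqS hab); [|apply: IH]. Qed.

Lemma preceq_refl (x : Ob E) : preceq x x.
Proof. by apply: preceq1; exists (idm E x); exact: idm_neq0. Qed.

Lemma preceq_hom (x y : Ob E) (f : Hom E x y) : f != 0 -> preceq x y.
Proof. by move=> hf; apply: preceq1; exists f. Qed.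

Section Intervals.
Hypothesis E_lf : locally_finite E.

Lemma interval_listP (x y : Ob E) :
  List.NoDup (interval_list x y) /\
  forall z, preceq x z -> preceq z y -> List.In z (interval_list x y).
Proof.
apply: (epsilon_spec (inhabits [::]) (fun zs => List.NoDup zs /\
  forall z, preceq x z -> preceq z y -> List.In z zs)).
have [zs hzs] := E_lf x y.
exists (undup zs); split; first by apply/NoDup_uniq; exact: undup_uniq.
by move=> z h1 h2; apply/In_mem; rewrite mem_undup; apply/In_mem; exact: hzs.
Qed.

Lemma interval_list_uniq (x y : Ob E) : uniq (interval_list x y).
Proof. by apply/NoDup_uniq; case: (interval_listP x y). Qed.

Lemma mem_interval_list (x y z : Ob E) :
  preceq x z -> preceq z y -> z \in interval_list x y.
Proof. by move=> h1 h2; apply/In_mem; case: (interval_listP x y) => _; apply. Qed.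

End Intervals.

Definition hbasis (x y : Ob E) (i : 'I_(hdim x y)) : Hom E x y := (vbasis fullv)`_i.

Lemma hom_expand (x y : Ob E) (g : Hom E x y) :
  g = \sum_(i < hdim x y) (dualb i g : k) *: hbasis i.
Proof.
rewrite {1}(coord_vbasis (memvf g)); apply: eq_bigr => i _.
by rewrite /dualb lfunE.
Qed.

Lemma dual_expand (x y : Ob E) (l : Cxy x y) :
  l = \sum_(i < hdim x y) (l (hbasis i) : k) *: dualb i.
Proof.
apply/lfunP => g; rewrite sum_lfunE {1}(hom_expand g) linear_sum /=.
by apply: eq_bigr => i _; rewrite linearZ /= scale_lfunE /GRing.scale /= mulrC.
Qed.

Lemma hom_nz_of_ord (x y : Ob E) (i : 'I_(hdim x y)) : hom_nz x y.
Proof.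
exists (vpick fullv); rewrite vpick0 -dimv_eq0 -lt0n.
exact: leq_ltn_trans (leq0n i) (ltn_ord i).
Qed.

Lemma precompE (x y z : Ob E) (c : Cxy x y) (g : Hom E x z) (h : Hom E z y) :
  precomp c g h = c (comp E h g).
Proof. by rewrite /precomp linfunE_lin // => a h1 h2; rewrite comp_linl linearP. Qed.

Definition postcomp (u z y : Ob E) (h : Hom E z y) (c : Cxy u y) : Cxy u z :=
  linfun (fun g : Hom E u z => c (comp E h g)).

Lemma postcompE (u z y : Ob E) (h : Hom E z y) (c : Cxy u y) (g : Hom E u z) :
  postcomp h c g = c (comp E h g).
Proof. by rewrite /postcomp linfunE_lin // => a g1 g2; rewrite comp_linr linearP. Qed.

Section EvaluationFamilies.
Variable P : lmodType k.

Lemma evfamE (x y : Ob E) (f : Hom E x y) (p : P) (c : Cxy x y) :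
  evfam f p c = (c f : k) *: p.
Proof.
rewrite /evfam; case: excluded_middle_informative => [H|[]] //.
by rewrite (Prop_irrelevance H (conj erefl erefl)).
Qed.

Lemma evfam_other (x y u w : Ob E) (f : Hom E x y) (p : P) (c : Cxy u w) :
  ~ (x = u /\ y = w) -> evfam f p c = 0.
Proof. by rewrite /evfam; case: excluded_middle_informative. Qed.

Lemma evfam_lin (x y : Ob E) (f : Hom E x y) (p : P) : linfam (evfam f p).
Proof.
move=> u w a c d.
case: (excluded_middle_informative (x = u /\ y = w)) => [[hu hw]|hn].
  by subst u w; rewrite !evfamE add_lfunE scale_lfunE scalerDl scalerA.
by rewrite !evfam_other // scaler0 addr0.
Qed.

Lemma evfam_postcomp (x z y u : Ob E) (f : Hom E x z) (h : Hom E z y) (p : P)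
    (c : Cxy u y) :
  evfam f p (postcomp h c) = evfam (comp E h f) p c.
Proof.
case: (excluded_middle_informative (x = u)) => [hu|hn].
  by subst u; rewrite !evfamE postcompE.
by rewrite !evfam_other // => -[].
Qed.

End EvaluationFamilies.
End Category.

Section ContramoduleLinearity.
Variables (k : fieldType) (E : kcat k) (P : lmodType k) (pi : fam E P -> P).
Hypothesis pi_contra : is_contramodule pi.

Lemma fam_ext (F G : fam E P) : (forall x y c, F x y c = G x y c) -> F = G.
Proof. by move=> h; do 3!apply: functional_extensionality_dep => ?; apply: h. Qed.

Lemma linfam0 : linfam (fun (x y : Ob E) (c : Cxy x y) => 0 : P).
Proof. by move=> x y a c d; rewrite scaler0 addr0. Qed.

Lemma linfam_sum I (s : seq I) (F : I -> fam E P) :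
  (forall i, linfam (F i)) -> linfam (fun x y c => \sum_(i <- s) F i x y c).
Proof.
move=> hF x y a c d; rewrite scaler_sumr -big_split /=.
by apply: eq_bigr => i _; rewrite hF.
Qed.

Lemma linfamZ (a : k) (F : fam E P) : linfam F -> linfam (fun x y c => a *: F x y c).
Proof. by move=> hF x y b c d; rewrite hF scalerDr !scalerA mulrC. Qed.

Lemma linfamB (F G : fam E P) : linfam F -> linfam G ->
  linfam (fun x y c => F x y c - G x y c).
Proof. by move=> hF hG x y a c d; rewrite hF hG scalerBr opprD addrACA. Qed.

Lemma pi_lincomb a (F G : fam E P) : linfam F -> linfam G ->
  pi (fun x y c => a *: F x y c + G x y c) = a *: pi F + pi G.
Proof. by case: pi_contra => h _; exact: h. Qed.

Lemma pi0 : pi (fun _ _ _ => 0) = 0.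
Proof.
have := pi_lincomb 1 linfam0 linfam0.
have -> : (fun x y c => 1 *: 0 + 0) = (fun _ _ _ => 0) :> fam E P.
  by apply: fam_ext => x y c; rewrite scaler0 addr0.
by rewrite scale1r -{1}[pi _]addr0 => /addrI.
Qed.

Lemma piZ a (F : fam E P) : linfam F -> pi (fun x y c => a *: F x y c) = a *: pi F.
Proof.
move=> hF; rewrite -[RHS]addr0 -pi0 -pi_lincomb //; last exact: linfam0.
by congr pi; apply: fam_ext => x y c; rewrite addr0.
Qed.

Lemma piB (F G : fam E P) : linfam F -> linfam G ->
  pi (fun x y c => F x y c - G x y c) = pi F - pi G.
Proof.
move=> hF hG; rewrite addrC -scaleN1r -pi_lincomb //.
by congr pi; apply: fam_ext => x y c; rewrite scaleN1r addrC.
Qed.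

Lemma pi_sum I (s : seq I) (F : I -> fam E P) :
  (forall i, linfam (F i)) ->
  pi (fun x y c => \sum_(i <- s) F i x y c) = \sum_(i <- s) pi (F i).
Proof.
move=> hF; elim: s => [|i s IH].
  by rewrite big_nil -[RHS]pi0; congr pi; apply: fam_ext => x y c; rewrite big_nil.
rewrite big_cons -IH -[pi (F i)]scale1r -pi_lincomb //; last exact: linfam_sum.
by congr pi; apply: fam_ext => x y c; rewrite big_cons scale1r.
Qed.

End ContramoduleLinearity.

(** * Deep morphisms and deep-nilpotent modules *)

Section Depth.
Variables (k : fieldType) (E : kcat k).

Record factorization (x y : Ob E) := Factorization {
  fmid : Ob E; fouter : Hom E fmid y; finner : Hom E x fmid }.

Definition fcomp (x y : Ob E) (t : factorization x y) : Hom E x y :=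
  comp E (fouter t) (finner t).

Hypothesis E_slf : left_strictly_locally_finite E.

Definition Xs (y : Ob E) : seq (Ob E) := sval (cid (proj2 E_slf y)).

Lemma Xs_prec (x y : Ob E) : x \in Xs y -> prec x y.
Proof. by move/In_mem; apply: (proj1 (svalP (cid (proj2 E_slf y)))). Qed.

Lemma Xs_factor (x y : Ob E) (f : Hom E x y) : prec x y ->
  exists2 s : seq (factorization x y),
    (forall t, List.In t s -> fmid t \in Xs y) & f = \sum_(t <- s) fcomp t.
Proof.
move=> hxy; have [n [xs [hxs [g [h ->]]]]] := proj2 (svalP (cid (proj2 E_slf y))) x f hxy.
exists [seq Factorization (h i) (g i) | i <- index_enum 'I_n]; last by rewrite big_map.
by move=> t /In_map [i _ ->]; apply/In_mem; exact: hxs.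
Qed.

(* [deep N f]: [f] lies in the [N]-th power of the ideal generated by the morphisms
   [w -> y] with [w] in [Xs y]. *)
Fixpoint deep (N : nat) (x y : Ob E) (f : Hom E x y) : Prop :=
  if N is N'.+1 then
    exists2 s : seq (factorization x y),
      (forall t, List.In t s -> fmid t \in Xs y /\ deep N' (finner t))
      & f = \sum_(t <- s) fcomp t
  else True.

Lemma deep_le m n (x y : Ob E) (f : Hom E x y) : (m <= n)%N -> deep n f -> deep m f.
Proof.
elim: m n x y f => [//|m IH] [//|n] x y f /= hmn [s hs ->].
by exists s => // t /hs [? ?]; split => //; exact: IH hmn _.
Qed.

Fixpoint shallow (N : nat) (y : Ob E) : seq (Ob E) :=
  interval_list y y ++ if N is N'.+1 then flatten [seq shallow N' w | w <- Xs y] else [::].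

Lemma deep_off_shallow N (x y : Ob E) (f : Hom E x y) : x \notin shallow N y -> deep N f.
Proof.
elim: N x y f => [//|N IH] x y f; rewrite mem_cat negb_or => /andP [hyy hX].
case: (eqVneq f 0) => [->|hf]; first by exists [::] => //; rewrite big_nil.
have hxy : prec x y.
  split=> [|hyx]; first exact: preceq_hom hf.
  have := mem_interval_list (proj1 E_slf) hyx (preceq_hom hf).
  by rewrite (negbTE hyy).
have [s hs ->] := Xs_factor f hxy; exists s => // t ht; split; first exact: hs.
apply: IH; apply: contra hX => hx; apply/flattenP.
by exists (shallow N (fmid t)); [apply: map_f; exact: hs|].
Qed.

Fixpoint layer (a : nat) (y : Ob E) : seq (Ob E) :=
  if a is a'.+1 then flatten [seq layer a' w | w <- Xs y] else [:: y].

Lemma deep_add a b (x y : Ob E) (f : Hom E x y) : deep (a + b) f ->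
  exists2 s : seq (factorization x y),
    (forall t, List.In t s ->
       [/\ fmid t \in layer a y, deep a (fouter t) & deep b (finner t)])
    & f = \sum_(t <- s) fcomp t.
Proof.
elim: a y f => [|a IH] y f.
  move=> hf; exists [:: Factorization (idm E y) f].
    by move=> t [<-|//]; rewrite /= mem_seq1.
  by rewrite big_seq1 /fcomp comp_idl.
rewrite addSn => -[s0 hs0 ->].
have hfactor t : List.In t s0 -> exists st : seq (factorization x (fmid t)),
    (forall r, List.In r st ->
       [/\ fmid r \in layer a (fmid t), deep a (fouter r) & deep b (finner r)])
    /\ finner t = \sum_(r <- st) fcomp r.
  by move=> ht; have [st ? ?] := IH _ _ (proj2 (hs0 t ht)); exists st.
have [F hF] := choice_In (fun=> [::]) hfactor.
exists (flatten [seq [seq Factorization (comp E (fouter t) (fouter r)) (finner r)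
                      | r <- F t] | t <- s0]).
  move=> u /In_flatten [l /In_map [t ht ->] /In_map [r hr ->]] /=.
  have [r_layer r_deep r_inner] := proj1 (hF t ht) r hr; have [t_Xs _] := hs0 t ht.
  split=> //; first by apply/flattenP; exists (layer a (fmid t)); rewrite ?map_f.
  by exists [:: Factorization (fouter t) (fouter r)] => [v [<-|//]|]; rewrite ?big_seq1.
rewrite big_flatten big_map /=; apply: eq_big_In => t ht.
rewrite big_map /fcomp [in LHS](proj2 (hF t ht)) comp_sumr; apply: eq_bigr => r _.
by rewrite comp_assoc.
Qed.

Definition deep_nilpotent (M : lmodE E) : Prop :=
  forall y : Ob E, exists N, forall x (f : Hom E x y) (m : Mv M x),
    deep N f -> Mact f m = 0.

Lemma deep_nilpotent_ext (P' T P'' : lmodE E) (alpha : forall x, Mv P' x -> Mv T x)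
    (beta : forall x, Mv T x -> Mv P'' x) :
  short_exact alpha beta -> deep_nilpotent P' -> deep_nilpotent P'' ->
  deep_nilpotent T.
Proof.
move=> [[alpha_lin alpha_nat] [[beta_lin beta_nat] [_ [_ exact_mid]]]] nil' nil'' y.
have [N1 hN1] := nil' y.
have [F hF] := @choice_In _ (fun=> nat) (fun=> 0%N) (layer N1 y) _ (fun w _ => nil'' w).
exists (N1 + \max_(w <- layer N1 y) F w)%N => x f m /deep_add [s hs ->].
rewrite Mact_suml big1_In // => t /hs [hw hout hin]; rewrite /fcomp Mact_comp.
have /exact_mid [a <-] : beta _ (Mact (finner t) m) = 0.
  rewrite beta_nat (hF _ (proj2 (In_mem _ _) hw)) //.
  by apply: deep_le hin; exact: leq_bigmax_seq.
by rewrite -alpha_nat hN1 // (is_lin0 (alpha_lin _)).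
Qed.

End Depth.

(** * The contramodule of a deep-nilpotent module *)

Section ProductModule.
Variables (k : fieldType) (E : kcat k) (T : lmodE E).

Definition prodT := forall y : Ob E, Mv T y.

HB.instance Definition _ := gen_eqMixin prodT.
HB.instance Definition _ := gen_choiceMixin prodT.

Lemma prodT_addA : associative (fun a b : prodT => fun y => a y + b y).
Proof. by move=> a b c; apply: functional_extensionality_dep => y; rewrite addrA. Qed.
Lemma prodT_addC : commutative (fun a b : prodT => fun y => a y + b y).
Proof. by move=> a b; apply: functional_extensionality_dep => y; rewrite addrC. Qed.
Lemma prodT_add0 : left_id (fun y => 0 : Mv T y) (fun a b : prodT => fun y => a y + b y).
Proof. by move=> a; apply: functional_extensionality_dep => y; rewrite add0r. Qed.
Lemma prodT_addN : left_inverse (fun y => 0 : Mv T y) (fun (a : prodT) y => - a y)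
  (fun a b : prodT => fun y => a y + b y).
Proof. by move=> a; apply: functional_extensionality_dep => y; rewrite addNr. Qed.

HB.instance Definition _ :=
  GRing.isZmodule.Build prodT prodT_addA prodT_addC prodT_add0 prodT_addN.

Definition prodT_scale (c : k) (a : prodT) : prodT := fun y => c *: a y.

Lemma prodT_scaleA a b v : prodT_scale a (prodT_scale b v) = prodT_scale (a * b) v.
Proof. by apply: functional_extensionality_dep => y; rewrite /prodT_scale scalerA. Qed.
Lemma prodT_scale1 : left_id 1 prodT_scale.
Proof.
by move=> v; apply: functional_extensionality_dep => y; rewrite /prodT_scale scale1r.
Qed.
Lemma prodT_scaleDr : right_distributive prodT_scale +%R.
Proof.
by move=> a u v; apply: functional_extensionality_dep => y; rewrite /prodT_scale scalerDr.
Qed.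
Lemma prodT_scaleDl v : {morph prodT_scale^~ v : a b / a + b}.
Proof.
by move=> a b; apply: functional_extensionality_dep => y; rewrite /prodT_scale scalerDl.
Qed.

HB.instance Definition _ := GRing.Zmodule_isLmodule.Build k prodT
  prodT_scaleA prodT_scale1 prodT_scaleDr prodT_scaleDl.

Lemma prodT_addE (a b : prodT) y : (a + b) y = a y + b y. Proof. by []. Qed.
Lemma prodT_scaleE c (a : prodT) y : (c *: a) y = c *: a y. Proof. by []. Qed.

Lemma prodT_sumE I (s : seq I) (F : I -> prodT) y :
  (\sum_(i <- s) F i) y = \sum_(i <- s) F i y.
Proof. by elim: s => [|i s IH]; rewrite ?big_nil // !big_cons prodT_addE IH. Qed.

Definition prod_single (x : Ob E) (m : Mv T x) : prodT := fun w =>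
  match excluded_middle_informative (x = w) with
  | left H => eq_rect x (fun z => Mv T z) m w H
  | right _ => 0
  end.

Lemma prod_single_at (x : Ob E) (m : Mv T x) : prod_single m x = m.
Proof.
rewrite /prod_single; case: excluded_middle_informative => [H|[]] //.
by rewrite (Prop_irrelevance H erefl).
Qed.

Lemma prod_single_off (x w : Ob E) (m : Mv T x) : x <> w -> prod_single m w = 0.
Proof. by rewrite /prod_single; case: excluded_middle_informative. Qed.

Lemma prod_single_lin (x : Ob E) : is_lin (@prod_single x).
Proof.
move=> a m1 m2; apply: functional_extensionality_dep => w.
case: (excluded_middle_informative (x = w)) => [hw|hw].
  by subst w; rewrite prodT_addE prodT_scaleE !prod_single_at.
by rewrite prodT_addE prodT_scaleE !prod_single_off // scaler0 addr0.
Qed.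

Lemma prod_single_inj (x : Ob E) : injective (@prod_single x).
Proof. by move=> m1 m2 h; rewrite -(prod_single_at m1) h prod_single_at. Qed.

End ProductModule.

Section ProductContramodule.
Variables (k : fieldType) (E : kcat k) (E_slf : left_strictly_locally_finite E).
Variable T : lmodE E.
Hypothesis T_nil : deep_nilpotent E_slf T.

Definition support (y : Ob E) : seq (Ob E) :=
  undup (y :: shallow E_slf (sval (cid (T_nil y))) y).

Lemma support_uniq y : uniq (support y).
Proof. exact: undup_uniq. Qed.

Lemma mem_support_self y : y \in support y.
Proof. by rewrite mem_undup mem_head. Qed.

Lemma Mact_off_support (x y : Ob E) (f : Hom E x y) (m : Mv T x) :
  x \notin support y -> Mact f m = 0.
Proof.
rewrite mem_undup in_cons negb_or => /andP [_ hx].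
by apply: (svalP (cid (T_nil y))); apply: deep_off_shallow.
Qed.

Lemma Mact_dual_expand (x y : Ob E) (f : Hom E x y) (m : Mv T x) :
  \sum_(i < hdim x y) Mact (hbasis i) ((dualb i f : k) *: m) = Mact f m.
Proof.
rewrite [in RHS](hom_expand f) Mact_suml; apply: eq_bigr => i _.
by rewrite MactZr MactZl.
Qed.

(* Objects outside [support y] act by zero on [T y], so no terms are missing here. *)
Definition prod_pi (F : fam E (prodT T)) : prodT T := fun y =>
  \sum_(x <- support y) \sum_(i < hdim x y) Mact (hbasis i) (F x y (dualb i) x).

Lemma prod_pi_lincomb a (F G : fam E (prodT T)) :
  prod_pi (fun x y c => a *: F x y c + G x y c) = a *: prod_pi F + prod_pi G.
Proof.
apply: functional_extensionality_dep => y.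
rewrite /prod_pi prodT_addE prodT_scaleE scaler_sumr -big_split; apply: eq_bigr => x _.
rewrite scaler_sumr -big_split; apply: eq_bigr => i _.
by rewrite prodT_addE prodT_scaleE (Mact_linm _ a).
Qed.

Lemma prod_pi_evfam (x y : Ob E) (f : Hom E x y) (q : prodT T) :
  prod_pi (evfam f q) = prod_single (Mact f (q x)).
Proof.
apply: functional_extensionality_dep => w; rewrite /prod_pi.
case: (excluded_middle_informative (y = w)) => [hw|hw]; last first.
  rewrite prod_single_off // big1 // => z _; rewrite big1 // => i _.
  by rewrite evfam_other ?Mact0r // => -[].
subst w; rewrite prod_single_at.
have other z : z != x -> \sum_(i < hdim z y) Mact (hbasis i) (evfam f q (dualb i) z) = 0.
  move=> hzx; rewrite big1 // => i _.
  by rewrite evfam_other ?Mact0r // => -[hxz _]; rewrite hxz eqxx in hzx.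
case: (boolP (x \in support y)) => hx; last first.
  rewrite big1_seq ?(Mact_off_support _ _ hx) // => z /andP [_ hz].
  by apply: other; apply: contraNneq hx => <-.
rewrite (bigD1_seq x) ?support_uniq //= [X in _ + X]big1_seq ?addr0; last first.
  by move=> z /andP [hzx _]; apply: other.
by rewrite -Mact_dual_expand; apply: eq_bigr => i _; rewrite evfamE.
Qed.

Lemma prod_pi_counit (p : prodT T) (F : fam E (prodT T)) :
  counit_fam_spec p F -> prod_pi F = p.
Proof.
move=> [Fxx Fxy]; apply: functional_extensionality_dep => y; rewrite /prod_pi.
rewrite (bigD1_seq y) ?mem_support_self ?support_uniq //= [X in _ + X]big1_seq ?addr0.
  rewrite -[RHS](Mact_id (p y)) -Mact_dual_expand; apply: eq_bigr => i _.
  by rewrite Fxx prodT_scaleE.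
move=> z /andP [hzy _]; apply: big1 => i _.
by rewrite Fxy ?Mact0r //; apply/eqP.
Qed.

Lemma Mact_precomp_dualb (u x y : Ob E) (g : Hom E u x) (Psi : Cxy x y -> Mv T u) :
  is_lin Psi ->
  \sum_(l < hdim u y) Mact (hbasis l) (Psi (precomp (dualb l) g)) =
  \sum_(i < hdim x y) Mact (comp E (hbasis i) g) (Psi (dualb i)).
Proof.
move=> Psi_lin.
under eq_bigr => l _ do rewrite [precomp _ _]dual_expand (is_lin_sum Psi_lin) Mact_sumr.
rewrite exchange_big /=; apply: eq_bigr => i _.
rewrite [in RHS](hom_expand (comp E (hbasis i) g)) Mact_suml; apply: eq_bigr => l _.
by rewrite (is_linZ Psi_lin) MactZr MactZl precompE.
Qed.

Section Coassociativity.
Variable f : forall z w : Ob E, Cxy z w -> fam E (prodT T).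
Arguments f : clear implicits.
Hypothesis f_lin :
  forall (z w : Ob E) (a : k) (c d : Cxy z w) (z' w' : Ob E) (c' : Cxy z' w'),
  f z w (a *: c + d) z' w' c' = a *: f z w c z' w' c' + f z w d z' w' c'.

Definition assoc_term (y x u : Ob E) : Mv T y :=
  \sum_(i < hdim x y) \sum_(j < hdim u x)
    Mact (comp E (hbasis i) (hbasis j)) (f x y (dualb i) u x (dualb j) u).

Lemma prod_pi_iterE y : prod_pi (fun z w c => prod_pi (f z w c)) y =
  \sum_(x <- support y) \sum_(u <- support x) assoc_term y x u.
Proof.
apply: eq_bigr => x _; rewrite exchange_big /=; apply: eq_bigr => i _.
rewrite Mact_sumr; apply: eq_bigr => u _.
by rewrite Mact_sumr; apply: eq_bigr => j _; rewrite Mact_comp.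
Qed.

Lemma prod_pi_comulE y : prod_pi (comul_fam f) y =
  \sum_(u <- support y) \sum_(x <- interval_list u y) assoc_term y x u.
Proof.
apply: eq_bigr => u _; rewrite /comul_fam.
under eq_bigr => l _ do rewrite prodT_sumE Mact_sumr.
rewrite exchange_big /=; apply: eq_bigr => x _.
under eq_bigr => l _ do rewrite prodT_sumE Mact_sumr.
rewrite exchange_big /= /assoc_term [RHS]exchange_big /=; apply: eq_bigr => j _.
rewrite (Mact_precomp_dualb (hbasis j) (Psi := fun c => f x y c u x (dualb j) u)) //.
by move=> a c d; rewrite f_lin prodT_addE prodT_scaleE.
Qed.

Lemma assoc_term_off_support_xy y x u : x \notin support y -> assoc_term y x u = 0.
Proof.
move=> hx; apply: big1 => i _; apply: big1 => j _.
by rewrite Mact_comp (Mact_off_support _ _ hx).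
Qed.

Lemma assoc_term_off_support_ux y x u : u \notin support x -> assoc_term y x u = 0.
Proof.
move=> hu; apply: big1 => i _; apply: big1 => j _.
by rewrite Mact_comp (Mact_off_support _ _ hu) Mact0r.
Qed.

Lemma assoc_term_off_support_uy y x u : u \notin support y -> assoc_term y x u = 0.
Proof.
by move=> hu; apply: big1 => i _; apply: big1 => j _; rewrite (Mact_off_support _ _ hu).
Qed.

Lemma assoc_term_off_interval y x u : x \notin interval_list u y -> assoc_term y x u = 0.
Proof.
move=> hx; apply: big1 => i _; apply: big1 => j _; apply: contraNeq hx => _.
have [g hg] := hom_nz_of_ord i; have [h hh] := hom_nz_of_ord j.
by rewrite (mem_interval_list (proj1 E_slf) (preceq_hom hh) (preceq_hom hg)).
Qed.

Lemma prod_pi_coassoc :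
  prod_pi (fun z w c => prod_pi (f z w c)) = prod_pi (comul_fam f).
Proof.
apply: functional_extensionality_dep => y; rewrite prod_pi_iterE prod_pi_comulE.
set X := undup (support y ++ flatten [seq interval_list u y | u <- support y]).
set U := undup (support y ++ flatten [seq support x | x <- X]).
have [X_uniq U_uniq] : uniq X /\ uniq U by split; exact: undup_uniq.
have sub_XU x : x \in X -> {subset support x <= U}.
  move=> hx u hu; rewrite mem_undup mem_cat; apply/orP; right.
  by apply/flattenP; exists (support x) => //; apply: map_f.
have sub_yX : {subset support y <= X} by move=> x hx; rewrite mem_undup mem_cat hx.
have sub_yU : {subset support y <= U} by move=> u hu; rewrite mem_undup mem_cat hu.
have sub_uX u : u \in support y -> {subset interval_list u y <= X}.
  move=> hu x hx; rewrite mem_undup mem_cat; apply/orP; right.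
  by apply/flattenP; exists (interval_list u y) => //; apply: map_f.
transitivity (\sum_(x <- X) \sum_(u <- U) assoc_term y x u).
  rewrite -(big_uniq_subset (support_uniq y) X_uniq sub_yX); last first.
    by move=> x _ hx; apply: big1 => u _; apply: assoc_term_off_support_xy.
  apply: eq_big_seq => x hx; apply: big_uniq_subset (support_uniq x) U_uniq _ _.
    by apply: sub_XU; exact: sub_yX.
  by move=> u _ hu; apply: assoc_term_off_support_ux.
rewrite exchange_big /= -(big_uniq_subset (support_uniq y) U_uniq sub_yU); last first.
  by move=> u _ hu; apply: big1 => x _; apply: assoc_term_off_support_uy.
apply: eq_big_seq => u hu; symmetry.
apply: big_uniq_subset (interval_list_uniq (proj1 E_slf) u y) X_uniq (sub_uX u hu) _.
by move=> x _ hx; apply: assoc_term_off_interval.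
Qed.

End Coassociativity.

Lemma prod_pi_contramodule : is_contramodule prod_pi.
Proof.
split=> [a F G _ _|]; first exact: prod_pi_lincomb.
split=> [p F _|g _ g_lin]; first exact: prod_pi_counit.
exact: prod_pi_coassoc.
Qed.

Lemma inTheta_prod (x : Ob E) (q : prodT T) :
  inTheta prod_pi x q <-> exists m : Mv T x, prod_single m = q.
Proof.
split=> [[p ->]|[m <-]]; first by rewrite prod_pi_evfam Mact_id; exists (p x).
by exists (prod_single m); rewrite prod_pi_evfam Mact_id prod_single_at.
Qed.

Lemma iso_Theta_prod : iso_Theta T prod_pi.
Proof.
exists (@prod_single _ _ T); split; first exact: prod_single_lin.
split; first exact: prod_single_inj.
split; first by move=> x q; rewrite inTheta_prod.
by move=> x y f m; rewrite prod_pi_evfam prod_single_at.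
Qed.

End ProductContramodule.

(** * Modules of the form Theta(P) are deep-nilpotent *)

Section StablePart.
Variables (k : fieldType) (E : kcat k) (E_slf : left_strictly_locally_finite E).
Variable M : lmodE E.
Hypothesis M_fin : module_locally_finite M.

Record generator (y : Ob E) := Generator {
  gsrc : Ob E; ghom : Hom E gsrc y; gvec : Mv M gsrc }.

Definition gval (y : Ob E) (t : generator y) : Mv M y := Mact (ghom t) (gvec t).

Definition deep_span (N : nat) (y : Ob E) (v : Mv M y) : Prop :=
  exists2 s : seq (generator y),
    (forall t, List.In t s -> deep E_slf N (ghom t)) & v = \sum_(t <- s) gval t.

Lemma deep_span_le m n y (v : Mv M y) : (m <= n)%N -> deep_span n v -> deep_span m v.
Proof. by move=> hmn [s hs ->]; exists s => // t /hs; apply: deep_le. Qed.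

Lemma deep_span0 n y : deep_span n (0 : Mv M y).
Proof. by exists [::]; rewrite ?big_nil. Qed.

Lemma deep_span_lin n y a (u v : Mv M y) :
  deep_span n u -> deep_span n v -> deep_span n (a *: u + v).
Proof.
move=> [s1 h1 ->] [s2 h2 ->].
exists ([seq Generator (ghom t) (a *: gvec t) | t <- s1] ++ s2).
  by move=> t /List.in_app_iff [/In_map [t' /h1 ? ->]|/h2].
rewrite big_cat big_map scaler_sumr; congr (_ + _); apply: eq_bigr => t _.
by rewrite /gval MactZr.
Qed.

Lemma deep_span_stabilizes y :
  exists N0, forall n, (N0 <= n)%N -> forall v : Mv M y, deep_span N0 v -> deep_span n v.
Proof.
have [s hs] := M_fin y.
apply: (descending_subspaces_stabilize hs) => [n|n a u v|n v]; first exact: deep_span0.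
  exact: deep_span_lin.
exact: deep_span_le.
Qed.

Definition stable_depth (y : Ob E) : nat := sval (cid (deep_span_stabilizes y)).

Lemma deep_span_stable y n (v : Mv M y) :
  (stable_depth y <= n)%N -> deep_span (stable_depth y) v -> deep_span n v.
Proof. by move=> hn; apply: (svalP (cid (deep_span_stabilizes y)) n hn). Qed.

Definition stable_part (y : Ob E) (v : Mv M y) : Prop := deep_span (stable_depth y) v.

Definition stable_decomposition (y : Ob E) (v : Mv M y) (s : seq (generator y)) : Prop :=
  (forall t, List.In t s -> gsrc t \in Xs E_slf y /\ stable_part (gvec t))
  /\ v = \sum_(t <- s) gval t.

Lemma stable_part_decomposes y (v : Mv M y) :
  stable_part v -> exists s, stable_decomposition v s.
Proof.
move=> hv; set K := maxn (stable_depth y) (\max_(w <- Xs E_slf y) stable_depth w).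
have [s0 hs0 ->] := deep_span_stable (leq_trans (leq_maxl _ _) (leqnSn K)) hv.
have hfactor t : List.In t s0 -> exists st : seq (factorization (gsrc t) y),
    (forall r, List.In r st -> fmid r \in Xs E_slf y /\ deep E_slf K (finner r))
    /\ ghom t = \sum_(r <- st) fcomp r.
  by move=> ht; have [st ? ?] := hs0 t ht; exists st.
have [F hF] := choice_In (fun=> [::]) hfactor.
exists (flatten [seq [seq Generator (fouter r) (Mact (finner r) (gvec t)) | r <- F t]
                | t <- s0]).
split.
  move=> u /In_flatten [l /In_map [t ht ->] /In_map [r hr ->]] /=.
  have [hr1 hr2] := proj1 (hF t ht) r hr; split => //.
  exists [:: Generator (finner r) (gvec t)]; last by rewrite big_seq1.
  move=> w [<-|//]; apply: deep_le hr2; apply: leq_trans (leq_maxr _ _).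
  exact: leq_bigmax_seq.
rewrite big_flatten big_map /=; apply: eq_big_In => t ht.
rewrite big_map /gval (proj2 (hF t ht)) Mact_suml; apply: eq_bigr => r _.
by rewrite Mact_comp.
Qed.

Definition stable_step (y : Ob E) (v : Mv M y) : seq (generator y) :=
  epsilon (inhabits [::]) (stable_decomposition v).

Lemma stable_stepP y (v : Mv M y) : stable_part v -> stable_decomposition v (stable_step v).
Proof. by move=> hv; apply: epsilon_spec; exact: stable_part_decomposes. Qed.

Variables (P : lmodType k) (pi : fam E P -> P).
Hypothesis pi_contra : is_contramodule pi.
Variable phi : forall x : Ob E, Mv M x -> P.
Hypothesis phi_lin : forall x, is_lin (@phi x).
Hypothesis phi_inj : forall x, injective (@phi x).
Hypothesis phi_act : forall (x y : Ob E) (f : Hom E x y) (m : Mv M x),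
  phi (Mact f m) = pi (evfam f (phi m)).

Section Swindle.
Variables (y0 : Ob E) (v0 : Mv M y0).
Hypothesis v0_stable : stable_part v0.

Definition chain_step (t : generator y0) : seq (generator y0) :=
  [seq Generator (comp E (ghom t) (ghom r)) (gvec r) | r <- stable_step (gvec t)].

Fixpoint chains (j : nat) : seq (generator y0) :=
  if j is j'.+1 then flatten [seq chain_step t | t <- chains j']
  else [:: Generator (idm E y0) v0].

(* Each step of a chain goes strictly down in [prec], so a chain of length [j] passes
   through [j.+1] distinct objects of an interval. *)
Lemma chains_inv j t : List.In t (chains j) ->
  [/\ stable_part (gvec t), preceq (gsrc t) y0 &
    exists2 path : seq (Ob E), size path = j.+1 /\ uniq path &
      forall z, z \in path -> preceq (gsrc t) z /\ preceq z y0].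
Proof.
elim: j t => [|j IH] t /=.
  case=> [<-|//]; split => //=; first exact: preceq_refl.
  by exists [:: y0] => // z; rewrite mem_seq1 => /eqP ->; split; exact: preceq_refl.
move=> /In_flatten [l /In_map [t0 ht0 ->] /In_map [r hr ->]] /=.
have [t0_stable t0_y0 [path [path_size path_uniq] path_int]] := IH t0 ht0.
have [r_Xs r_stable] := proj1 (stable_stepP t0_stable) r hr.
have [r_t0 t0_r] := Xs_prec r_Xs.
split => //; first exact: preceq_trans r_t0 t0_y0.
exists (gsrc r :: path).
  by rewrite /= path_size path_uniq andbT; split=> //; apply/negP => /path_int [/t0_r].
move=> z; rewrite in_cons => /predU1P [->|/path_int [h1 h2]].
  by split; [exact: preceq_refl|exact: preceq_trans r_t0 t0_y0].
by split=> //; exact: preceq_trans r_t0 h1.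
Qed.

Definition chain_bound (u : Ob E) : nat := size (interval_list u y0).

Lemma chains_bounded j t (u : Ob E) : List.In t (chains j) -> preceq u (gsrc t) ->
  (j < chain_bound u)%N.
Proof.
move=> ht hu; have [_ _ [path [<- path_uniq] path_int]] := chains_inv ht.
apply: uniq_leq_size path_uniq _ => z /path_int [h1 h2].
by rewrite (mem_interval_list (proj1 E_slf) (preceq_trans hu h1) h2).
Qed.

Definition step_relation (t : generator y0) : fam E P := fun u w c =>
  evfam (idm E (gsrc t)) (phi (gvec t)) c
  - \sum_(r <- stable_step (gvec t)) evfam (ghom r) (phi (gvec r)) c.
Arguments step_relation : clear implicits.

Lemma step_relation_lin t : linfam (step_relation t).
Proof.
apply: linfamB; first exact: evfam_lin.
by apply: linfam_sum => r; exact: evfam_lin.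
Qed.

Lemma pi_step_relation t : stable_part (gvec t) -> pi (step_relation t) = 0.
Proof.
move=> t_stable; rewrite /step_relation (piB pi_contra); last first.
- by apply: linfam_sum => r; exact: evfam_lin.
- exact: evfam_lin.
rewrite (pi_sum pi_contra) => [|r]; last exact: evfam_lin.
rewrite -phi_act Mact_id; under eq_bigr => r _ do rewrite -phi_act.
by rewrite -(is_lin_sum (@phi_lin (gsrc t))) -(proj2 (stable_stepP t_stable)) subrr.
Qed.

(* [evfam (ghom t) 1 c] is [c (ghom t)] on the component [C^{gsrc t, y0}] and [0]
   elsewhere; cutting at [chain_bound z] loses nothing, as longer chains contain no
   generator with source [z]. *)
Definition swindle_fam (z w : Ob E) (c : Cxy z w) : fam E P := fun u w' c' =>
  \sum_(j < chain_bound z) \sum_(t <- chains j)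
     (evfam (ghom t) (1 : k^o) c : k) *: step_relation t u w' c'.
Arguments swindle_fam : clear implicits.

Lemma swindle_fam_lin z w (c : Cxy z w) : linfam (swindle_fam z w c).
Proof.
by apply: linfam_sum => j; apply: linfam_sum => t; apply: linfamZ; exact: step_relation_lin.
Qed.

Lemma swindle_fam_linear (z w : Ob E) (a : k) (c d : Cxy z w) (z' w' : Ob E)
    (c' : Cxy z' w') :
  swindle_fam z w (a *: c + d) z' w' c'
  = a *: swindle_fam z w c z' w' c' + swindle_fam z w d z' w' c'.
Proof.
rewrite /swindle_fam scaler_sumr -big_split; apply: eq_bigr => j _.
rewrite scaler_sumr -big_split; apply: eq_bigr => t _.
by rewrite evfam_lin scalerDl scalerA.
Qed.

Lemma pi_swindle_fam z w (c : Cxy z w) : pi (swindle_fam z w c) = 0.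
Proof.
have rel_lin t :
    linfam (fun u w' c' => (evfam (ghom t) (1 : k^o) c : k) *: step_relation t u w' c').
  by apply: linfamZ; exact: step_relation_lin.
have chain_lin (j : 'I_(chain_bound z)) : linfam (fun u w' c' => \sum_(t <- chains j)
    (evfam (ghom t) (1 : k^o) c : k) *: step_relation t u w' c').
  exact: linfam_sum.
rewrite /swindle_fam (pi_sum pi_contra _ chain_lin) big1 // => j _.
rewrite (pi_sum pi_contra _ rel_lin) big1_In // => t ht.
rewrite (piZ pi_contra) ?pi_step_relation ?scaler0 //; last exact: step_relation_lin.
by case: (chains_inv ht).
Qed.

Definition chain_defect (u : Ob E) (c : Cxy u y0) (t : generator y0) : P :=
  evfam (ghom t) (phi (gvec t)) c
  - \sum_(r <- stable_step (gvec t)) evfam (comp E (ghom t) (ghom r)) (phi (gvec r)) c.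

Lemma swindle_fam_comul_term (z u : Ob E) (c : Cxy u y0) (t : generator y0) :
  \sum_(i < hdim u z)
     (evfam (ghom t) (1 : k^o) (precomp c (hbasis i)) : k) *: step_relation t u z (dualb i)
  = if gsrc t == z then chain_defect c t else 0.
Proof.
case: t => x h m /=; case: eqP => [hxz|hxz]; last first.
  by apply: big1 => i _; rewrite evfam_other ?scale0r // => -[].
subst x; have rel_lin : is_lin (step_relation (Generator h m) u z).
  exact: step_relation_lin.
transitivity (step_relation (Generator h m) u z
  (\sum_(i < hdim u z) (postcomp h c (hbasis i) : k) *: dualb i)).
  rewrite (is_lin_sum rel_lin); apply: eq_bigr => i _.
  by rewrite (is_linZ rel_lin) evfamE postcompE precompE /GRing.scale /= mulr1.
rewrite -dual_expand /step_relation /chain_defect /= evfam_postcomp comp_idr.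
by congr (_ - _); apply: eq_bigr => r _; rewrite evfam_postcomp.
Qed.

Lemma chain_defect_off (u : Ob E) (c : Cxy u y0) j t :
  List.In t (chains j) -> ~ preceq u (gsrc t) -> chain_defect c t = 0.
Proof.
move=> ht hu; have [t_stable _ _] := chains_inv ht.
rewrite /chain_defect evfam_other => [|[ut _]]; last first.
  by apply: hu; rewrite ut; exact: preceq_refl.
rewrite big1_In ?subrr // => r hr; rewrite evfam_other // => -[ur _]; apply: hu.
by rewrite -ur; case: (Xs_prec (proj1 (proj1 (stable_stepP t_stable) r hr))).
Qed.

Definition chain_value (u : Ob E) (c : Cxy u y0) (j : nat) : P :=
  \sum_(t <- chains j) evfam (ghom t) (phi (gvec t)) c.

Lemma sum_chain_defect (u : Ob E) (c : Cxy u y0) j :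
  \sum_(t <- chains j) chain_defect c t = chain_value c j - chain_value c j.+1.
Proof.
rewrite sumrB /chain_value /= big_flatten big_map; congr (_ - _).
by apply: eq_bigr => t _; rewrite big_map.
Qed.

Lemma chain_value_bound (u : Ob E) (c : Cxy u y0) : chain_value c (chain_bound u) = 0.
Proof.
apply: big1_In => t ht; rewrite evfam_other // => -[ut _].
by have := chains_bounded ht (u := u); rewrite ut ltnn => /(_ (preceq_refl _)).
Qed.

Lemma chain_value0 (u : Ob E) (c : Cxy u y0) :
  chain_value c 0 = evfam (idm E y0) (phi v0) c.
Proof. exact: big_seq1. Qed.

Lemma comul_swindle_fam_chains (u : Ob E) (c : Cxy u y0) :
  comul_fam swindle_fam c = \sum_(j < chain_bound u) \sum_(t <- chains j) chain_defect c t.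
Proof.
set I := interval_list u y0.
set N := maxn (chain_bound u) (\max_(z <- I) chain_bound z).
pose D z j := \sum_(t <- chains j) (if gsrc t == z then chain_defect c t else 0).
have D_high z j : (chain_bound z <= j)%N -> D z j = 0.
  move=> hj; apply: big1_In => t ht; case: eqP => // tz.
  by have := chains_bounded ht (u := z); rewrite tz ltnNge hj => /(_ (preceq_refl _)).
transitivity (\sum_(z <- I) \sum_(j < N) D z j).
  apply: eq_big_seq => z hz; rewrite exchange_big /=.
  rewrite -(big_ord_widen_vanish (F := D z) _ (D_high z)); last first.
    by apply: leq_trans (leq_maxr _ _); exact: leq_bigmax_seq.
  apply: eq_bigr => j _; rewrite exchange_big /=; apply: eq_bigr => t _.
  exact: swindle_fam_comul_term.
rewrite exchange_big /= [RHS](big_ord_widen_vanish (leq_maxl _ _ : (chain_bound u <= N)%N)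
  (F := fun j => \sum_(t <- chains j) chain_defect c t)) => [|j hj]; last first.
  apply: big1_In => t ht; apply: (chain_defect_off c ht) => /(chains_bounded ht).
  by rewrite ltnNge hj.
apply: eq_bigr => j _; rewrite exchange_big /=; apply: eq_big_In => t ht.
rewrite sum_if_eq_uniq ?(interval_list_uniq (proj1 E_slf)) //; case: ifPn => // tI.
apply/esym/(chain_defect_off c ht) => ut; move: tI.
by have [_ ty0 _] := chains_inv ht; rewrite (mem_interval_list (proj1 E_slf) ut ty0).
Qed.

Lemma comul_swindle_fam (u w : Ob E) (c : Cxy u w) :
  comul_fam swindle_fam c = evfam (idm E y0) (phi v0) c.
Proof.
case: (excluded_middle_informative (w = y0)) => [wy0|wy0]; last first.
  rewrite evfam_other => [|[_ /esym //]].
  apply: big1 => z _; apply: big1 => i _; apply: big1 => j _; apply: big1 => t _.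
  by rewrite evfam_other ?scale0r // => -[_ /esym].
subst w; rewrite comul_swindle_fam_chains.
transitivity (- \sum_(0 <= j < chain_bound u) (chain_value c j.+1 - chain_value c j)).
  by rewrite big_mkord -sumrN; apply: eq_bigr => j _; rewrite sum_chain_defect opprB.
by rewrite telescope_sumr // chain_value_bound chain_value0 sub0r opprK.
Qed.

Lemma stable_part_eq0 : v0 = 0.
Proof.
have := proj2 (proj2 pi_contra) swindle_fam swindle_fam_lin swindle_fam_linear.
have -> : (fun z w c => pi (swindle_fam z w c)) = (fun _ _ _ => 0).
  by apply: fam_ext => z w c; exact: pi_swindle_fam.
have -> : comul_fam swindle_fam = evfam (idm E y0) (phi v0).
  by apply: fam_ext => u w c; exact: comul_swindle_fam.
rewrite (pi0 pi_contra) -phi_act Mact_id => /esym phi_v0.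
by apply: (@phi_inj y0); rewrite phi_v0 (is_lin0 (@phi_lin y0)).
Qed.

End Swindle.

Lemma deep_nilpotent_of_Theta : deep_nilpotent E_slf M.
Proof.
move=> y; exists (stable_depth y) => x f m hf; apply: stable_part_eq0.
by exists [:: Generator f m]; [move=> t [<-|]|rewrite big_seq1].
Qed.

End StablePart.

Section ThetaClass.
Variables (k : fieldType) (E : kcat k).

Lemma Theta_class_locally_finite (M : lmodE E) :
  in_Theta_class M -> module_locally_finite M.
Proof.
move=> [P [pi [_ [pi_fin [phi [phi_lin [phi_inj [phi_im _]]]]]]]] y.
have [s [s_Theta s_span]] := pi_fin y.
have pre q : List.In q s -> exists m, phi y m = q by move/s_Theta/phi_im.
have [pre_s pre_sK] := choice_In (fun=> 0) pre.
exists (map pre_s s) => m; apply: spanned_map_inj (phi_lin y) (@phi_inj y) _.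
rewrite -map_comp map_id_in => [|q /In_mem/pre_sK //].
by apply/spanned_ord/s_span/phi_im; exists m.
Qed.

Lemma Theta_class_deep_nilpotent (E_slf : left_strictly_locally_finite E) (M : lmodE E) :
  in_Theta_class M -> deep_nilpotent E_slf M.
Proof.
move=> M_class; have M_fin := Theta_class_locally_finite M_class.
move: M_class => [P [pi [pi_contra [_ [phi [phi_lin [phi_inj [_ phi_act]]]]]]]].
exact: (deep_nilpotent_of_Theta E_slf M_fin pi_contra (phi := phi) phi_lin phi_inj phi_act).
Qed.

Lemma prod_pi_locally_finite (E_slf : left_strictly_locally_finite E) (T : lmodE E)
    (T_nil : deep_nilpotent E_slf T) :
  module_locally_finite T -> contra_locally_finite (prod_pi T_nil).
Proof.
move=> T_fin x; have [s s_span] := T_fin x.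
exists (map (@prod_single _ _ T x) s); split.
  by move=> q /In_map [m _ ->]; apply/inTheta_prod; exists m.
move=> q /inTheta_prod [m <-].
have [c ->] := spanned_map (@prod_single_lin _ _ T x) (s_span m).
by exists (fun i => c i).
Qed.

End ThetaClass.

Theorem corollary6p1 (k : fieldType) (E : kcat k) :
  left_strictly_locally_finite E ->
  forall (P' T P'' : lmodE E)
         (alpha : forall x, Mv P' x -> Mv T x)
         (beta : forall x, Mv T x -> Mv P'' x),
    short_exact alpha beta ->
    in_Theta_class P' -> in_Theta_class P'' -> in_Theta_class T.
Proof.
move=> E_slf P' T P'' alpha beta T_ext P'_class P''_class.
have T_nil : deep_nilpotent E_slf T := deep_nilpotent_ext T_ext
  (Theta_class_deep_nilpotent E_slf P'_class) (Theta_class_deep_nilpotent E_slf P''_class).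
have T_fin : module_locally_finite T := module_locally_finite_ext T_ext
  (Theta_class_locally_finite P'_class) (Theta_class_locally_finite P''_class).
exists (prodT T), (prod_pi T_nil); split; first exact: prod_pi_contramodule.
split; [exact: prod_pi_locally_finite | exact: iso_Theta_prod].
Qed.
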